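(* Let $\mathcal P=(S_1,\dots,S_n)$ be a partition of $V(G)$ into sets of size $r$ such that every $S_i$ is an independent set of $G$ (no edge of $G$ has both endpoints in the same $S_i$), and let $T=T_{\vec B,\mathcal P}$. Then $\mathbb E_{\vec B}(\xi)=0$, and hence $\mathbb E_{\vec B}(\hat t_{\mathrm{Neyman}})=\bar t$.
   Context: Let $n,p,q$ be positive integers, $r=p+q$, $G$ a finite simple graph with $|V(G)|=rn$ and no isolated vertices; $\mathcal N(v)$ neighbor set. For each $v$, $x_v,t_v\in\mathbb R$ and $f_v:2^{\mathcal N(v)}\to\mathbb R$ with $f_v(\emptyset)=0$; outcomes $y_v=x_v+\mathbf 1_T(v)t_v+f_v(T\cap\mathcal N(v))$; $\bar t=\frac1{rn}\sum_vt_v$. $\sigma_T(v)=q$ if $v\in T$, $-p$ otherwise; for $|T|=pn$, $\hat t_{\mathrm{Neyman}}=\frac1{pqn}\sum_v\sigma_T(v)y_v$ and $\xi=\frac1{pqn}\sum_v\sigma_T(v)f_v(T\cap\mathcal N(v))$. Restricted randomization: $S_i=\{w_i^1,\dots,w_i^r\}$, $B_1,\dots,B_n$ i.i.d. uniform $p$-subsets of $\{1,\dots,r\}$, $T_{\vec B,\mathcal P}=\{w_i^j:j\in B_i\}$. *)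

From HB Require Import structures.
From mathcomp Require Import all_boot all_order all_algebra.
Set Implicit Arguments. Unset Strict Implicit. Unset Printing Implicit Defensive.
Import Order.TTheory GRing.Theory Num.Theory.
Local Open Scope ring_scope.

Definition nbhd (V : finType) (e : rel V) (v : V) : {set V} := [set u | e v u].

Definition Bchoices (n r p : nat) : {set {ffun 'I_n -> {set 'I_r}}} :=
  [set B : {ffun 'I_n -> {set 'I_r}} | [forall i, #|B i| == p]].

(* T_{B,P} = { w_i^j : j in B_i }, with the partition given by w (S_i = w(i,_)). *)
Definition treatT (V : finType) (n r : nat) (w : 'I_n * 'I_r -> V)
  (B : {ffun 'I_n -> {set 'I_r}}) : {set V} :=
  [set v | [exists i : 'I_n, exists j : 'I_r, (j \in B i) && (w (i, j) == v)]].

(* Expectation over B_1,...,B_n i.i.d. uniform p-subsets of {1..r}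
   (= uniform over the product set Bchoices). *)
Definition EB (R : realFieldType) (n r p : nat)
  (X : {ffun 'I_n -> {set 'I_r}} -> R) : R :=
  (\sum_(B in Bchoices n r p) X B) / (#|Bchoices n r p|)%:R.

Definition sigmaT (R : realFieldType) (V : finType) (p q : nat) (T : {set V}) (v : V) : R :=
  if v \in T then q%:R else - (p%:R).

Definition outcome (R : realFieldType) (V : finType) (e : rel V)
  (x t : V -> R) (f : V -> {set V} -> R) (T : {set V}) (v : V) : R :=
  x v + (if v \in T then t v else 0) + f v (T :&: nbhd e v).

Definition tNeyman (R : realFieldType) (V : finType) (e : rel V) (n p q : nat)
  (x t : V -> R) (f : V -> {set V} -> R) (T : {set V}) : R :=
  (p * q * n)%:R^-1 * \sum_v sigmaT R p q T v * outcome e x t f T v.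

Definition xiT (R : realFieldType) (V : finType) (e : rel V) (n p q : nat)
  (f : V -> {set V} -> R) (T : {set V}) : R :=
  (p * q * n)%:R^-1 * \sum_v sigmaT R p q T v * f v (T :&: nbhd e v).

Definition tbar (R : realFieldType) (V : finType) (n r : nat) (t : V -> R) : R :=
  (r * n)%:R^-1 * \sum_v t v.

Arguments EB {R} n r p X.
Arguments xiT {R V} e n p q f T.
Arguments tNeyman {R V} e n p q x t f T.
Arguments tbar {R V} n r t.
Arguments treatT {V} n r w B.

(* For a vertex v = w_i^j, the randomisation is invariant under permuting the
   labels of the block S_i inside B_i.  Hence, for any g(B) not depending on
   B_i, the sum of sigma_T(w_i^j) g(B) over all designs is the same for every
   j; summing over j gives sum_j sigma_{B_i}(j) = pq - qp = 0 for each design,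
   so each of these sums vanishes.  Because S_i is independent, T /\ N(v) does
   not depend on B_i, which gives E(xi) = 0; the Neyman estimator then reduces
   to the term sigma_T(v) 1_T(v) t_v = sigma_T(v) (q / r) t_v + (pq / r) t_v. *)
From HB Require Import structures.
From mathcomp Require Import all_boot all_order all_algebra all_fingroup.
From mathcomp Require Import ring.
Import Order.TTheory GRing.Theory Num.Theory.
Local Open Scope ring_scope.

Section SignSum.
Variables (R : realFieldType) (p q : nat).

Lemma sum_sigmaT (V : finType) (T : {set V}) :
  #|V| = (p + q)%N -> #|T| = p -> \sum_v sigmaT R p q T v = 0.
Proof.
move=> cardV cardT; rewrite (bigID (mem T)) /=.
rewrite (eq_bigr (fun _ => q%:R)); last by move=> v; rewrite /sigmaT => ->.
rewrite [X in _ + X](eq_bigr (fun _ => - p%:R)); last first.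
  by move=> v /negbTE; rewrite /sigmaT => ->.
have cardCT : #|[predC T]| = q.
  by apply/eqP; rewrite -(eqn_add2l p) -{1}cardT cardC cardV.
rewrite !sumr_const cardT [#|_|]cardCT.
by rewrite -mulrnA mulNrn -mulrnA mulnC subrr.
Qed.

Lemma sigmaT_imset (U V : finType) (h : U -> V) (T : {set U}) (u : U) :
  injective h -> sigmaT R p q (h @: T) (h u) = sigmaT R p q T u.
Proof. by move=> h_inj; rewrite /sigmaT mem_imset. Qed.

Lemma sigmaT_mul_outcome (V : finType) (e : rel V) (x t : V -> R)
    (f : V -> {set V} -> R) (T : {set V}) (v : V) :
  (0 < p + q)%N ->
  sigmaT R p q T v * outcome e x t f T v =
  sigmaT R p q T v * (x v + q%:R / (p + q)%:R * t v + f v (T :&: nbhd e v))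
  + (p * q)%:R / (p + q)%:R * t v.
Proof.
move=> r_gt0; have r_neq0 : ((p + q)%:R : R) != 0 by rewrite pnatr_eq0 -lt0n.
by rewrite /sigmaT /outcome; case: ifP => _; rewrite natrM; field; rewrite -natrD.
Qed.

End SignSum.

Section BlockRandomization.
Variables (R : realFieldType) (n p q : nat).
Local Notation r := (p + q)%N.
Local Notation design := {ffun 'I_n -> {set 'I_r}}.

Definition ignores_block {T : Type} (i : 'I_n) (g : design -> T) :=
  forall B B' : design, (forall k, k != i -> B k = B' k) -> g B = g B'.

Definition permute_block (i : 'I_n) (s : {perm 'I_r}) (B : design) : design :=
  [ffun k => if k == i then s @: B k else B k].

Lemma permute_block_inj i s : injective (permute_block i s).
Proof.
move=> B B' /ffunP eqB; apply/ffunP => k; have := eqB k; rewrite !ffunE.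
by case: ifP => // _; apply: imset_inj; apply: perm_inj.
Qed.

Lemma permute_block_Bchoices i s B :
  (permute_block i s B \in Bchoices n r p) = (B \in Bchoices n r p).
Proof.
rewrite !inE; apply: eq_forallb => k; rewrite ffunE.
by case: ifP => // _; rewrite card_imset //; apply: perm_inj.
Qed.

Lemma sum_Bchoices_permute_block i s (F : design -> R) :
  \sum_(B in Bchoices n r p) F (permute_block i s B) =
  \sum_(B in Bchoices n r p) F B.
Proof.
rewrite [RHS](reindex_inj (permute_block_inj i s)).
by apply: eq_bigl => B; rewrite permute_block_Bchoices.
Qed.

Lemma sum_sigmaT_block_ignores (i : 'I_n) (j : 'I_r) (g : design -> R) :
  ignores_block i g ->
  \sum_(B in Bchoices n r p) sigmaT R p q (B i) j * g B = 0.
Proof.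
move=> g_ign.
pose S j' := \sum_(B in Bchoices n r p) sigmaT R p q (B i) j' * g B.
have S_const j' : S j' = S j.
  rewrite /S -(sum_Bchoices_permute_block i (tperm j j')).
  apply: eq_bigr => B _; rewrite ffunE eqxx.
  rewrite -[X in sigmaT _ _ _ _ X](tpermL j j') sigmaT_imset; last exact: perm_inj.
  by congr (_ * _); apply: g_ign => k ik; rewrite ffunE (negbTE ik).
have : r%:R * S j = 0.
  rewrite mulr_natl -[X in _ *+ X](card_ord r) -sumr_const.
  rewrite -(eq_bigr _ (fun j' _ => S_const j')) /S exchange_big /=.
  apply: big1 => B; rewrite inE => /forallP /(_ i) /eqP cardBi.
  by rewrite -mulr_suml sum_sigmaT ?card_ord // mul0r.
have r_gt0 : (0 < r)%N by apply: leq_ltn_trans (ltn_ord j).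
by move/eqP; rewrite mulf_eq0 pnatr_eq0 eqn0Ngt r_gt0 => /eqP.
Qed.

Lemma Bchoices_card_gt0 : (0 < #|Bchoices n r p|)%N.
Proof.
apply/card_gt0P; exists [ffun _ => [set widen_ord (leq_addr q p) j | j : 'I_p]].
rewrite inE; apply/forallP => k; rewrite ffunE card_imset ?card_ord //.
by move=> a b /(congr1 val) /= /val_inj.
Qed.

Variables (V : finType) (w : 'I_n * 'I_r -> V) (w_bij : bijective w).

Lemma mem_treatT B k l : (w (k, l) \in treatT n r w B) = (l \in B k).
Proof.
rewrite inE; apply/existsP/idP => [[k' /existsP [l' /andP [l'B /eqP]]]|lB].
  by move/(bij_inj w_bij) => [<- <-].
by exists k; apply/existsP; exists l; rewrite lB eqxx.
Qed.

Lemma sigmaT_treatT B k l :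
  sigmaT R p q (treatT n r w B) (w (k, l)) = sigmaT R p q (B k) l.
Proof. by rewrite /sigmaT mem_treatT. Qed.

Lemma ignores_block_treatT_setI (i : 'I_n) (A : {set V}) :
  (forall l, w (i, l) \notin A) ->
  ignores_block i (fun B => treatT n r w B :&: A).
Proof.
case: w_bij => winv _ winvK Si_notin_A B B' eqB; apply/setP => u.
rewrite !in_setI -(winvK u); case: (winv u) => k l; rewrite !mem_treatT.
have [->|ki] := eqVneq k i; last by rewrite eqB.
by rewrite (negbTE (Si_notin_A l)) !andbF.
Qed.

End BlockRandomization.

Arguments ignores_block {n p q T}.

Theorem mainTheorem11 (R : realFieldType) (n p q : nat) (V : finType) (e : rel V)
  (hn : (0 < n)%N) (hp : (0 < p)%N) (hq : (0 < q)%N)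
  (hV : #|V| = ((p + q) * n)%N)
  (e_sym : symmetric e) (e_irr : irreflexive e)
  (no_iso : forall v : V, exists u : V, e v u)
  (x t : V -> R) (f : V -> {set V} -> R) (hf0 : forall v, f v set0 = 0)
  (w : 'I_n * 'I_(p + q) -> V) (w_bij : bijective w)
  (w_indep : forall (i : 'I_n) (j j' : 'I_(p + q)), ~~ e (w (i, j)) (w (i, j'))) :
  EB n (p + q) p (fun B => xiT e n p q f (treatT n (p + q) w B)) = 0 /\
  EB n (p + q) p (fun B => tNeyman e n p q x t f (treatT n (p + q) w B)) = tbar n (p + q) t.
Proof.
have [winv _ winvK] := w_bij.
have sum_vertex v g : ignores_block (winv v).1 g ->
    \sum_(B in Bchoices n (p + q) p) sigmaT R p q (treatT n (p + q) w B) v * g B = 0.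
  rewrite -{2}(winvK v); case: (winv v) => i j g_ign.
  under eq_bigr do rewrite sigmaT_treatT //.
  exact: sum_sigmaT_block_ignores.
have nbhd_ign v : ignores_block (winv v).1 (fun B => treatT n (p + q) w B :&: nbhd e v).
  apply: ignores_block_treatT_setI => // l; rewrite inE -{1}(winvK v).
  by case: (winv v) => i j; apply: w_indep.
split.
  rewrite /EB /xiT -mulr_sumr exchange_big big1 ?mulr0 ?mul0r // => v _.
  by apply: sum_vertex => B B' /(nbhd_ign v) ->.
rewrite /EB /tNeyman /tbar -mulr_sumr exchange_big /=.
set N := #|Bchoices n (p + q) p|.
rewrite (eq_bigr (fun v => (p * q)%:R / (p + q)%:R * t v *+ N)) => [|v _]; last first.
  under eq_bigr do rewrite sigmaT_mul_outcome ?addn_gt0 ?hp //.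
  rewrite big_split /= sum_vertex ?add0r ?sumr_const //.
  by move=> B B' /(nbhd_ign v) ->.
rewrite sumrMnl -[_ *+ N]mulr_natr -mulr_sumr.
have N_neq0 : (N%:R : R) != 0.
  by rewrite pnatr_eq0 -lt0n Bchoices_card_gt0.
rewrite !natrM; field.
by rewrite -natrD N_neq0 !pnatr_eq0 -!lt0n hn hp hq addn_gt0 hp.
Qed.
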